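(* For any sets $X,Y$, the map $(-)^\dagger:(X\to\mathcal W(Y))\to(\mathcal W(X)\to\mathcal W(Y))$ is Scott continuous, where function spaces carry the pointwise order.
   Context: $\mathcal A=\langle U,+,\cdot,\mathbf 0,\mathbf 1\rangle$ is a partial semiring ($+$ commutative, associative, possibly partial, unit $\mathbf 0$; $\cdot$ total, associative, unit $\mathbf 1$; two-sided distributivity; $\mathbf 0$ annihilates), naturally ordered ($u\le v$ iff $\exists w.\,u+w=v$ is a partial order), Scott continuous (for every directed $D\subseteq U$ and $y$: $\sup_{x\in D}(x+y)=(\sup D)+y$, $\sup_{x\in D}(x\cdot y)=(\sup D)\cdot y$, $\sup_{x\in D}(y\cdot x)=y\cdot\sup D$), with a top element. Infinite sums are suprema of finite partial sums. $\mathcal W(X)$: maps $m:X\to U$ with countable support $\mathrm{supp}(m)=\{x:m(x)\neq\mathbf 0\}$ and defined mass $\sum_{x\in\mathrm{supp}(m)}m(x)$, ordered by $m_1\sqsubseteq m_2$ iff $m_1+m=m_2$ for some $m$ (operations pointwise). Functions $f,g:X\to\mathcal W(Y)$ are ordered by $f\sqsubseteq^\bullet g$ iff $f(x)\sqsubseteq g(x)$ for all $x$; similarly for functions $\mathcal W(X)\to\mathcal W(Y)$. $f^\dagger(m)(y)=\sum_{x\in\mathrm{supp}(m)}m(x)\cdot f(x)(y)$. Scott continuous means preserving suprema of directed sets. *)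

From Stdlib Require Import List ClassicalEpsilon.
Import ListNotations.
Set Implicit Arguments.

Record PSR := mkPSR {
  car :> Type;
  padd : car -> car -> option car;
  pmul : car -> car -> car;
  pzero : car;
  pone : car }.

Definition obind {T : Type} (o : option T) (f : T -> option T) : option T :=
  match o with Some a => f a | None => None end.

Section Defs.
Variable A : PSR.

Definition le (u v : A) : Prop := exists w, padd A u w = Some v.

Definition directed {T : Type} (R : T -> T -> Prop) (D : T -> Prop) : Prop :=
  (exists x, D x) /\
  forall x y, D x -> D y -> exists z, D z /\ R x z /\ R y z.

Definition is_sup_in {T : Type} (P : T -> Prop) (R : T -> T -> Prop)
  (D : T -> Prop) (s : T) : Prop :=
  P s /\ (forall x, D x -> R x s) /\
  (forall t, P t -> (forall x, D x -> R x t) -> R s t).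

Definition is_sup (D : A -> Prop) (s : A) : Prop :=
  is_sup_in (fun _ => True) le D s.

Record PSR_axioms : Prop := {
  add_comm : forall u v, padd A u v = padd A v u;
  add_assoc : forall u v w,
    obind (padd A u v) (fun a => padd A a w) = obind (padd A v w) (fun a => padd A u a);
  add_zero : forall u, padd A u (pzero A) = Some u;
  mul_assoc : forall u v w, pmul A u (pmul A v w) = pmul A (pmul A u v) w;
  mul_one_l : forall u, pmul A (pone A) u = u;
  mul_one_r : forall u, pmul A u (pone A) = u;
  distr_l : forall u v w s, padd A v w = Some s ->
    padd A (pmul A u v) (pmul A u w) = Some (pmul A u s);
  distr_r : forall u v w s, padd A v w = Some s ->
    padd A (pmul A v u) (pmul A w u) = Some (pmul A s u);
  mul_zero_l : forall u, pmul A (pzero A) u = pzero A;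
  mul_zero_r : forall u, pmul A u (pzero A) = pzero A;
  le_refl : forall u, le u u;
  le_trans : forall u v w, le u v -> le v w -> le u w;
  le_antisym : forall u v, le u v -> le v u -> u = v;
  has_top : exists t, forall u, le u t;
  (* sup D exists for every directed D (presupposed by the continuity axioms) *)
  dir_complete : forall D, directed le D -> exists s, is_sup D s;
  (* sup_{x in D} (x + y) = (sup D) + y, as a Kleene equality *)
  cont_add : forall D s y, directed le D -> is_sup D s -> forall v,
    padd A s y = Some v <->
    ((forall x, D x -> exists w, padd A x y = Some w) /\
     is_sup (fun w => exists x, D x /\ padd A x y = Some w) v);
  cont_mul_l : forall D s y, directed le D -> is_sup D s ->
    is_sup (fun w => exists x, D x /\ w = pmul A x y) (pmul A s y);
  cont_mul_r : forall D s y, directed le D -> is_sup D s ->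
    is_sup (fun w => exists x, D x /\ w = pmul A y x) (pmul A y s) }.

Fixpoint fsum {I : Type} (u : I -> A) (l : list I) : option A :=
  match l with
  | [] => Some (pzero A)
  | x :: l' => obind (fsum u l') (fun a => padd A (u x) a)
  end.

Definition has_sum {I : Type} (u : I -> A) (S : I -> Prop) (v : A) : Prop :=
  (forall l, NoDup l -> (forall i, In i l -> S i) -> exists w, fsum u l = Some w) /\
  is_sup (fun w => exists l, NoDup l /\ (forall i, In i l -> S i) /\ fsum u l = Some w) v.

(** the value of the sum (unspecified if the sum is undefined) *)
Definition isum {I : Type} (u : I -> A) (S : I -> Prop) : A :=
  epsilon (inhabits (pzero A)) (has_sum u S).

Definition supp {X : Type} (m : X -> A) : X -> Prop := fun x => m x <> pzero A.

Definition countable {X : Type} (S : X -> Prop) : Prop :=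
  exists g : X -> nat, forall x y, S x -> S y -> g x = g y -> x = y.

Definition isW {X : Type} (m : X -> A) : Prop :=
  countable (supp m) /\ exists v, has_sum m (supp m) v.

Definition leW {X : Type} (m1 m2 : X -> A) : Prop :=
  exists m, isW m /\ forall x, padd A (m1 x) (m x) = Some (m2 x).

Definition isKl {X Y : Type} (f : X -> Y -> A) : Prop := forall x, isW (f x).
Definition leKl {X Y : Type} (f g : X -> Y -> A) : Prop := forall x, leW (f x) (g x).
Definition isWW {X Y : Type} (h : (X -> A) -> (Y -> A)) : Prop :=
  forall m, isW m -> isW (h m).
Definition leWW {X Y : Type} (h k : (X -> A) -> (Y -> A)) : Prop :=
  forall m, isW m -> leW (h m) (k m).

Definition dagger {X Y : Type} (f : X -> Y -> A) (m : X -> A) : Y -> A :=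
  fun y => isum (fun x => pmul A (m x) (f x y)) (supp m).

End Defs.

(* Suprema in the Kleisli order are computed pointwise, and f^dagger(m)(y) is the
   directed supremum of the finite partial sums of x |-> m(x) f(x)(y).  Scott
   continuity of + in each argument makes finite sums jointly continuous in their
   summands, so a directed supremum of Kleisli maps passes through every partial sum
   and then through the supremum over partial sums.  That s^dagger(m) is again in
   W(Y) is a Fubini argument: a finite partial sum over y of s^dagger(m)(y) is the
   countable sum over x of m(x) times a finite sum of s(x), which exists because it
   is bounded by m(x) times the top element. *)

From Stdlib Require Import List ClassicalEpsilon Classical Permutation Cantor.
Import ListNotations.

Section PartialSemiring.
Variable A : PSR.
Hypothesis HA : PSR_axioms A.

Lemma padd_0l (u : A) : padd A (pzero A) u = Some u.
Proof. rewrite (add_comm HA). apply (add_zero HA). Qed.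

Definition oadd (o1 o2 : option A) : option A :=
  match o1, o2 with Some a, Some b => padd A a b | _, _ => None end.

Definition oget (o : option A) : A := match o with Some a => a | None => pzero A end.

Lemma oadd_comm o1 o2 : oadd o1 o2 = oadd o2 o1.
Proof. destruct o1, o2; simpl; try apply (add_comm HA); reflexivity. Qed.

Lemma oadd_assoc o1 o2 o3 : oadd (oadd o1 o2) o3 = oadd o1 (oadd o2 o3).
Proof.
  destruct o1 as [u|], o2 as [v|], o3 as [w|]; simpl; auto.
  - exact (add_assoc HA u v w).
  - destruct (padd A u v); reflexivity.
Qed.

Lemma oadd_0l o : oadd (Some (pzero A)) o = o.
Proof. destruct o; simpl; auto using padd_0l. Qed.

Lemma oadd_ACA a b c d : oadd (oadd a b) (oadd c d) = oadd (oadd a c) (oadd b d).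
Proof.
  rewrite !oadd_assoc. f_equal. rewrite <- !oadd_assoc. f_equal. apply oadd_comm.
Qed.

Fixpoint osum {I} (u : I -> option A) (l : list I) : option A :=
  match l with [] => Some (pzero A) | i :: l' => oadd (u i) (osum u l') end.

Lemma fsum_osum {I} (u : I -> A) l : fsum A u l = osum (fun i => Some (u i)) l.
Proof. induction l as [|x l IH]; simpl; [reflexivity|]. rewrite <- IH. reflexivity. Qed.

Lemma osum_app {I} (u : I -> option A) l1 l2 :
  osum u (l1 ++ l2) = oadd (osum u l1) (osum u l2).
Proof.
  induction l1 as [|x l1 IH]; cbn [osum app].
  - now rewrite oadd_0l.
  - now rewrite IH, oadd_assoc.
Qed.

Lemma osum_perm {I} (u : I -> option A) {l l'} : Permutation l l' -> osum u l = osum u l'.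
Proof.
  induction 1; cbn [osum]; try congruence.
  rewrite <- !oadd_assoc, (oadd_comm (u y)). reflexivity.
Qed.

Lemma osum_oadd {I} (u v : I -> option A) l :
  osum (fun i => oadd (u i) (v i)) l = oadd (osum u l) (osum v l).
Proof.
  induction l as [|x l IH]; cbn [osum].
  - now rewrite oadd_0l.
  - now rewrite IH, oadd_ACA.
Qed.

Lemma osum_ext {I} (u v : I -> option A) l :
  (forall i, In i l -> u i = v i) -> osum u l = osum v l.
Proof.
  induction l as [|x l IH]; intros H; cbn [osum]; [reflexivity|].
  rewrite H by (left; reflexivity). f_equal. apply IH. intros i Hi. apply H. right. exact Hi.
Qed.

Lemma osum_zero {I} (l : list I) : osum (fun _ => Some (pzero A)) l = Some (pzero A).
Proof. induction l as [|x l IH]; cbn [osum]; [reflexivity|]. now rewrite IH, oadd_0l. Qed.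

Lemma osum_exchange {I J} (F : I -> J -> option A) K L :
  osum (fun i => osum (F i) L) K = osum (fun j => osum (fun i => F i j) K) L.
Proof.
  induction K as [|i K IH]; cbn [osum].
  - symmetry. apply osum_zero.
  - rewrite IH, <- osum_oadd. reflexivity.
Qed.

Lemma le_0l (u : A) : le A (pzero A) u.
Proof. exists u. apply padd_0l. Qed.

Lemma le_padd_l {u v r : A} : padd A u v = Some r -> le A u r.
Proof. intros H. now exists v. Qed.

Lemma padd_le {a a' b b' c' : A} : le A a a' -> le A b b' -> padd A a' b' = Some c' ->
  exists c, padd A a b = Some c /\ le A c c'.
Proof.
  intros [w1 H1] [w2 H2] H.
  assert (E : oadd (oadd (Some a) (Some b)) (oadd (Some w1) (Some w2)) = Some c').
  { rewrite oadd_ACA. simpl. rewrite H1, H2. exact H. }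
  simpl in E. destruct (padd A a b) as [c|], (padd A w1 w2) as [w|]; simpl in E; try discriminate.
  exists c. split; [reflexivity | now exists w].
Qed.

Lemma pmul_le_l (c : A) {a b : A} : le A a b -> le A (pmul A c a) (pmul A c b).
Proof. intros [w H]. exists (pmul A c w). now apply (distr_l HA). Qed.

Lemma fsum_le {I} (u v : I -> A) l b :
  (forall i, In i l -> le A (u i) (v i)) -> fsum A v l = Some b ->
  exists a, fsum A u l = Some a /\ le A a b.
Proof.
  revert b; induction l as [|x l IH]; simpl; intros b Huv Hv.
  - exists (pzero A). injection Hv as <-. split; [reflexivity | apply (le_refl HA)].
  - destruct (fsum A v l) as [b'|]; simpl in Hv; [|discriminate].
    destruct (IH b' (fun i Hi => Huv i (or_intror Hi)) eq_refl) as [a' [-> Ha']].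
    exact (padd_le (Huv x (or_introl eq_refl)) Ha' Hv).
Qed.

Lemma fsum_pmul_l {I} c (u : I -> A) l a :
  fsum A u l = Some a -> fsum A (fun i => pmul A c (u i)) l = Some (pmul A c a).
Proof.
  revert a; induction l as [|x l IH]; simpl; intros a H.
  - injection H as <-. now rewrite (mul_zero_r HA).
  - destruct (fsum A u l) as [b|]; simpl in H; [|discriminate].
    rewrite (IH b eq_refl). simpl. now apply (distr_l HA).
Qed.

Lemma fsum_pmul_r {I} c (u : I -> A) l a :
  fsum A u l = Some a -> fsum A (fun i => pmul A (u i) c) l = Some (pmul A a c).
Proof.
  revert a; induction l as [|x l IH]; simpl; intros a H.
  - injection H as <-. now rewrite (mul_zero_l HA).
  - destruct (fsum A u l) as [b|]; simpl in H; [|discriminate].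
    rewrite (IH b eq_refl). simpl. now apply (distr_r HA).
Qed.

Lemma fsum_zero {I} (u : I -> A) l :
  (forall i, In i l -> u i = pzero A) -> fsum A u l = Some (pzero A).
Proof.
  induction l as [|x l IH]; simpl; intros H; [reflexivity|].
  rewrite IH by auto. simpl. rewrite H by auto. apply (add_zero HA).
Qed.

Lemma NoDup_incl_Permutation {I} {l1 l : list I} :
  NoDup l1 -> incl l1 l -> NoDup l -> exists l2, Permutation l (l1 ++ l2).
Proof.
  intros N1 Hincl N.
  exists (filter (fun i => if excluded_middle_informative (In i l1) then false else true) l).
  apply NoDup_Permutation; [exact N | apply NoDup_app; [exact N1 | apply NoDup_filter, N |] |].
  - intros i H1 H2. apply filter_In in H2 as [_ H2].
    destruct excluded_middle_informative; [discriminate | contradiction].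
  - intros i. rewrite in_app_iff, filter_In.
    destruct (excluded_middle_informative (In i l1)); intuition (discriminate || auto).
Qed.

Lemma fsum_incl_le {I} (u : I -> A) K1 K2 a b :
  NoDup K1 -> incl K1 K2 -> NoDup K2 ->
  fsum A u K1 = Some a -> fsum A u K2 = Some b -> le A a b.
Proof.
  intros N1 Hincl N2 Ea Eb. destruct (NoDup_incl_Permutation N1 Hincl N2) as [K P].
  rewrite fsum_osum, (osum_perm _ P), osum_app, <- !fsum_osum, Ea in Eb.
  destruct (fsum A u K) as [c|]; simpl in Eb; [|discriminate].
  exact (le_padd_l Eb).
Qed.

Lemma is_sup_ub {D : A -> Prop} {s x} : is_sup A D s -> D x -> le A x s.
Proof. intros [_ [Hub _]]. apply Hub. Qed.

Lemma is_sup_least {D : A -> Prop} {s t} : is_sup A D s ->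
  (forall x, D x -> le A x t) -> le A s t.
Proof. intros [_ [_ Hl]]. apply Hl. trivial. Qed.

Lemma sup_unique {D : A -> Prop} {s s'} : is_sup A D s -> is_sup A D s' -> s = s'.
Proof.
  intros Hs Hs'. apply (le_antisym HA).
  - apply (is_sup_least Hs). intros x Hx. exact (is_sup_ub Hs' Hx).
  - apply (is_sup_least Hs'). intros x Hx. exact (is_sup_ub Hs Hx).
Qed.

Lemma is_sup_ext (D D' : A -> Prop) s :
  (forall x, D x <-> D' x) -> is_sup A D s -> is_sup A D' s.
Proof.
  intros H Hs. split; [trivial | split].
  - intros x Hx. apply (is_sup_ub Hs), H, Hx.
  - intros t _ Ht. apply (is_sup_least Hs). intros x Hx. apply Ht, H, Hx.
Qed.

Definition ofam {J} (P : J -> Prop) (a : J -> option A) : A -> Prop :=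
  fun x => exists j, P j /\ a j = Some x.

Lemma is_sup_ofam_ext {J} (P : J -> Prop) (a a' : J -> option A) s :
  (forall j, P j -> a j = a' j) -> is_sup A (ofam P a) s -> is_sup A (ofam P a') s.
Proof.
  intros H. apply is_sup_ext. intros x.
  split; intros [j [Pj E]]; exists j; split; auto; [rewrite <- H | rewrite H]; auto.
Qed.

Lemma directed_mono {T} (R R' : T -> T -> Prop) (P : T -> Prop) :
  (forall i j, P i -> P j -> R i j -> R' i j) -> directed R P -> directed R' P.
Proof.
  intros H [Hne Hd]. split; [exact Hne|]. intros i j Pi Pj.
  destruct (Hd i j Pi Pj) as [k [Pk [Rik Rjk]]]. exists k. auto.
Qed.

Lemma directed_ofam {J} (R : J -> J -> Prop) (P : J -> Prop) (a : J -> option A) :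
  directed R P -> (forall j, P j -> exists x, a j = Some x) ->
  (forall i j x y, P i -> P j -> R i j -> a i = Some x -> a j = Some y -> le A x y) ->
  directed (le A) (ofam P a).
Proof.
  intros [[j0 P0] Hd] Hdef Hmono. split.
  - destruct (Hdef j0 P0) as [x Hx]. exists x, j0. auto.
  - intros x y [i [Pi Ex]] [j [Pj Ey]]. destruct (Hd i j Pi Pj) as [k [Pk [Rik Rjk]]].
    destruct (Hdef k Pk) as [z Ez]. exists z. split; [exists k; auto | split; eauto].
Qed.

Lemma directed_img {J} (R : J -> J -> Prop) (P : J -> Prop) (a : J -> A) :
  directed R P -> (forall i j, P i -> P j -> R i j -> le A (a i) (a j)) ->
  directed (le A) (ofam P (fun j => Some (a j))).
Proof.
  intros Hd Hmono. apply (directed_ofam R); [exact Hd | eauto |].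
  intros i j x y Pi Pj Rij Ex Ey. injection Ex as <-. injection Ey as <-. auto.
Qed.

Lemma sup_padd_r (D : A -> Prop) s y : directed (le A) D -> is_sup A D s ->
  (forall x, D x -> exists w, padd A x y = Some w) ->
  exists v, padd A s y = Some v /\ is_sup A (ofam D (fun x => padd A x y)) v.
Proof.
  intros Hdir Hs Hdef.
  destruct (dir_complete HA (D := ofam D (fun x => padd A x y))) as [v Hv].
  - apply (directed_ofam (le A)); [exact Hdir | exact Hdef |].
    intros x1 x2 w1 w2 _ _ Hx E1 E2.
    destruct (padd_le Hx (le_refl HA y) E2) as [c [Ec Hc]].
    assert (w1 = c) as -> by congruence. exact Hc.
  - exists v. split; [|exact Hv]. apply (cont_add HA y Hdir Hs v). auto.
Qed.

Lemma sup_pmul_l {J} (P : J -> Prop) (a : J -> A) sa c :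
  directed (le A) (ofam P (fun j => Some (a j))) -> is_sup A (ofam P (fun j => Some (a j))) sa ->
  is_sup A (ofam P (fun j => Some (pmul A c (a j)))) (pmul A c sa).
Proof.
  intros Hdir Hsup. refine (is_sup_ext _ _ _ _ (cont_mul_r HA c Hdir Hsup)).
  intros w. split.
  - intros [x [[j [Pj E]] ->]]. injection E as <-. exists j. auto.
  - intros [j [Pj E]]. injection E as <-. exists (a j). split; [exists j|]; auto.
Qed.

Lemma sup_padd {J} (P : J -> Prop) (a b : J -> A) sa sb :
  directed (fun i j => le A (a i) (a j) /\ le A (b i) (b j)) P ->
  is_sup A (ofam P (fun j => Some (a j))) sa -> is_sup A (ofam P (fun j => Some (b j))) sb ->
  (forall j, P j -> exists c, padd A (a j) (b j) = Some c) ->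
  exists c, padd A sa sb = Some c /\ is_sup A (ofam P (fun j => padd A (a j) (b j))) c.
Proof.
  intros Hdir Ha Hb Hdef.
  assert (Hcross : forall i j, P i -> P j -> exists c, padd A (a i) (b j) = Some c /\
    forall t, (forall x, ofam P (fun k => padd A (a k) (b k)) x -> le A x t) -> le A c t).
  { intros i j Pi Pj. destruct (proj2 Hdir i j Pi Pj) as [k [Pk [[Hik _] [_ Hjk]]]].
    destruct (Hdef k Pk) as [ck Eck]. destruct (padd_le Hik Hjk Eck) as [c [Ec Hc]].
    exists c. split; [exact Ec|]. intros t Ht.
    apply (le_trans HA) with ck; [exact Hc | apply Ht; exists k; auto]. }
  assert (Hsa_b : forall j, P j -> exists cj, padd A sa (b j) = Some cj /\
    is_sup A (ofam (ofam P (fun i => Some (a i))) (fun x => padd A x (b j))) cj).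
  { intros j Pj. apply sup_padd_r; [| exact Ha |].
    - apply (directed_img _ _ _ Hdir). tauto.
    - intros x [i [Pi E]]. injection E as <-. destruct (Hcross i j Pi Pj) as [c [Ec _]]. eauto. }
  destruct (sup_padd_r (ofam P (fun j => Some (b j))) sb sa) as [c [Ec Hc]]; [| exact Hb | |].
  - apply (directed_img _ _ _ Hdir). tauto.
  - intros x [j [Pj E]]. injection E as <-. destruct (Hsa_b j Pj) as [cj [Ecj _]].
    exists cj. now rewrite (add_comm HA).
  - exists c. split; [now rewrite (add_comm HA) | split; [trivial | split]].
    + intros x [j [Pj Ex]]. destruct (Hsa_b j Pj) as [cj [Ecj _]].
      destruct (padd_le (is_sup_ub Ha (ex_intro _ j (conj Pj eq_refl))) (le_refl HA (b j)) Ecj)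
        as [x' [Ex' Hx']].
      assert (x = x') as -> by congruence.
      apply (le_trans HA) with cj; [exact Hx'|]. apply (is_sup_ub Hc).
      exists (b j). split; [exists j; auto | now rewrite (add_comm HA)].
    + intros t _ Ht. apply (is_sup_least Hc). intros w [x [[j [Pj E]] Ew]]. injection E as <-.
      destruct (Hsa_b j Pj) as [cj [Ecj Hcj]].
      assert (w = cj) as -> by (rewrite (add_comm HA) in Ew; congruence).
      apply (is_sup_least Hcj). intros w' [x [[i [Pi E]] Ew']]. injection E as <-.
      destruct (Hcross i j Pi Pj) as [c' [Ec' Hc']].
      assert (w' = c') as -> by congruence. exact (Hc' t Ht).
Qed.

Lemma fsum_sup {J Y} (P : J -> Prop) (g : J -> Y -> A) (h : Y -> A) L :
  directed (fun i j => forall y, le A (g i y) (g j y)) P ->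
  (forall y, is_sup A (ofam P (fun j => Some (g j y))) (h y)) ->
  (forall j, P j -> exists c, fsum A (g j) L = Some c) ->
  exists c, fsum A h L = Some c /\ is_sup A (ofam P (fun j => fsum A (g j) L)) c.
Proof.
  intros Hdir Hh. induction L as [|y L IH]; intros Hdef.
  - exists (pzero A). split; [reflexivity|]. destruct Hdir as [[j0 P0] _].
    split; [trivial | split].
    + intros x [j [_ E]]. injection E as <-. apply (le_refl HA).
    + intros t _ Ht. apply Ht. exists j0. auto.
  - set (b := fun j => oget (fsum A (g j) L)).
    assert (Hb : forall j, P j -> fsum A (g j) L = Some (b j)).
    { intros j Pj. destruct (Hdef j Pj) as [c Hc]. simpl in Hc. unfold b.
      destruct (fsum A (g j) L); [reflexivity | discriminate]. }
    assert (Hcons : forall j, P j -> padd A (g j y) (b j) = fsum A (g j) (y :: L)).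
    { intros j Pj. simpl. now rewrite (Hb j Pj). }
    destruct IH as [c' [Ec' Hc']]; [intros j Pj; eauto|].
    destruct (sup_padd P (fun j => g j y) b (h y) c') as [c [Ec Hc]].
    + refine (directed_mono _ _ _ _ Hdir). intros i j Pi Pj Hij. split; [apply Hij|].
      destruct (fsum_le (g i) (g j) L (b j) (fun z _ => Hij z) (Hb j Pj)) as [x [Ex Hx]].
      rewrite (Hb i Pi) in Ex. injection Ex as ->. exact Hx.
    + apply Hh.
    + exact (is_sup_ofam_ext _ _ _ _ Hb Hc').
    + intros j Pj. rewrite Hcons by exact Pj. apply Hdef, Pj.
    + exists c. split; [simpl; now rewrite Ec'|].
      exact (is_sup_ofam_ext _ _ _ _ Hcons Hc).
Qed.

Definition finsub {I} (S : I -> Prop) (l : list I) : Prop :=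
  NoDup l /\ forall i, In i l -> S i.

Lemma finsub_directed {I} (S : I -> Prop) : directed (@incl I) (finsub S).
Proof.
  split; [exists []; split; [constructor | intros i []]|].
  intros K1 K2 [_ S1] [_ S2].
  set (K := nodup (fun x y => excluded_middle_informative (x = y)) (K1 ++ K2)).
  assert (HK : forall i, In i K <-> In i K1 \/ In i K2).
  { intros i. unfold K. rewrite nodup_In, in_app_iff. reflexivity. }
  exists K. split; [split; [apply NoDup_nodup|] | split]; intros i Hi.
  - apply HK in Hi as [Hi|Hi]; auto.
  - apply HK. auto.
  - apply HK. auto.
Qed.

Lemma has_sum_iff {I} (u : I -> A) S v : has_sum A u S v <->
  (forall l, finsub S l -> exists w, fsum A u l = Some w) /\
  is_sup A (ofam (finsub S) (fsum A u)) v.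
Proof.
  unfold has_sum, finsub. split; intros [Hdef Hsup]; split.
  - intros l [N Hl]. auto.
  - revert Hsup. apply is_sup_ext. firstorder.
  - auto.
  - revert Hsup. apply is_sup_ext. firstorder.
Qed.

Lemma has_sum_fsum_le {I} (u : I -> A) S v K w :
  has_sum A u S v -> finsub S K -> fsum A u K = Some w -> le A w v.
Proof.
  intros Hv HK Ew. apply has_sum_iff in Hv as [_ Hv]. apply (is_sup_ub Hv). exists K. auto.
Qed.

Lemma has_sum_exists {I} (u : I -> A) S :
  (forall l, finsub S l -> exists w, fsum A u l = Some w) -> exists v, has_sum A u S v.
Proof.
  intros Hdef.
  destruct (dir_complete HA (D := ofam (finsub S) (fsum A u))) as [v Hv].
  - apply (directed_ofam (@incl I)); [apply finsub_directed | exact Hdef |].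
    intros K1 K2 w1 w2 [N1 _] [N2 _] Hincl. exact (fsum_incl_le u K1 K2 w1 w2 N1 Hincl N2).
  - exists v. apply has_sum_iff. auto.
Qed.

Lemma isum_eq {I} (u : I -> A) S v : has_sum A u S v -> isum A u S = v.
Proof.
  intros Hv. exact (sup_unique (proj2 (epsilon_spec _ _ (ex_intro _ v Hv))) (proj2 Hv)).
Qed.

Lemma has_sum_le {I} (u v : I -> A) S a b : (forall i, S i -> le A (u i) (v i)) ->
  has_sum A u S a -> has_sum A v S b -> le A a b.
Proof.
  intros Huv Ha Hb. pose proof (proj1 (has_sum_iff _ _ _) Ha) as [_ Ha'].
  apply (is_sup_least Ha'). intros x [K [HK Ex]].
  destruct (proj1 (proj1 (has_sum_iff _ _ _) Hb) K HK) as [y Ey].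
  destruct (fsum_le u v K y (fun i Hi => Huv i (proj2 HK i Hi)) Ey) as [x' [Ex' Hx']].
  assert (x = x') as -> by congruence.
  apply (le_trans HA) with y; [exact Hx' | exact (has_sum_fsum_le v S b K y Hb HK Ey)].
Qed.

Lemma has_sum_sup {J I} (P : J -> Prop) (u : J -> I -> A) (w : I -> A) S (sigma : J -> A) b :
  directed (fun j k => forall i, le A (u j i) (u k i)) P ->
  (forall i, is_sup A (ofam P (fun j => Some (u j i))) (w i)) ->
  (forall j, P j -> has_sum A (u j) S (sigma j)) -> has_sum A w S b ->
  is_sup A (ofam P (fun j => Some (sigma j))) b.
Proof.
  intros Hdir Hw Hu Hb. split; [trivial | split].
  - intros x [j [Pj E]]. injection E as <-. apply (has_sum_le (u j) w S); auto.
    intros i _. apply (is_sup_ub (Hw i)). exists j. auto.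
  - intros t _ Ht. apply (is_sup_least (proj2 (proj1 (has_sum_iff _ _ _) Hb))).
    intros c [K [HK Ec]].
    destruct (fsum_sup P u w K Hdir Hw) as [c' [Ec' Hc']].
    { intros j Pj. exact (proj1 (proj1 (has_sum_iff _ _ _) (Hu j Pj)) K HK). }
    assert (c = c') as -> by congruence.
    apply (is_sup_least Hc'). intros x [j [Pj Ex]].
    apply (le_trans HA) with (sigma j).
    + exact (has_sum_fsum_le _ _ _ K x (Hu j Pj) HK Ex).
    + apply Ht. exists j. auto.
Qed.

Lemma fsum_has_sum {Y I} (u : Y -> I -> A) S (sigma : Y -> A) (tau : I -> A) c L :
  (forall y, has_sum A (u y) S (sigma y)) ->
  (forall i, S i -> fsum A (fun y => u y i) L = Some (tau i)) ->
  has_sum A tau S c -> fsum A sigma L = Some c.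
Proof.
  intros Hu Htau Hc.
  set (g := fun K y => oget (fsum A (u y) K)).
  assert (Hg : forall K y, finsub S K -> fsum A (u y) K = Some (g K y)).
  { intros K y HK. destruct (proj1 (proj1 (has_sum_iff _ _ _) (Hu y)) K HK) as [x Hx].
    unfold g. now rewrite Hx. }
  assert (Hexchange : forall K, finsub S K -> fsum A tau K = fsum A (g K) L).
  { intros K HK. rewrite !fsum_osum.
    rewrite (osum_ext (fun y => Some (g K y)) (fun y => osum (fun i => Some (u y i)) K))
      by (intros y _; rewrite <- fsum_osum; symmetry; apply Hg, HK).
    rewrite osum_exchange. apply osum_ext. intros i Hi.
    rewrite <- fsum_osum. symmetry. apply Htau, HK, Hi. }
  destruct (fsum_sup (finsub S) g sigma L) as [c' [Ec' Hc']].
  - refine (directed_mono _ _ _ _ (finsub_directed S)). intros K1 K2 HK1 HK2 Hincl y.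
    exact (fsum_incl_le (u y) K1 K2 _ _ (proj1 HK1) Hincl (proj1 HK2) (Hg K1 y HK1) (Hg K2 y HK2)).
  - intros y. refine (is_sup_ofam_ext _ _ _ _ _ (proj2 (proj1 (has_sum_iff _ _ _) (Hu y)))).
    intros K HK. apply Hg, HK.
  - intros K HK. rewrite <- Hexchange by exact HK. exact (proj1 (proj1 (has_sum_iff _ _ _) Hc) K HK).
  - rewrite Ec'. f_equal. apply (sup_unique Hc').
    exact (is_sup_ofam_ext _ _ _ _ Hexchange (proj2 (proj1 (has_sum_iff _ _ _) Hc))).
Qed.

Lemma countable_sub {X} (S S' : X -> Prop) :
  (forall x, S' x -> S x) -> countable S -> countable S'.
Proof. intros H [g Hg]. exists g. intros x y Hx Hy. apply Hg; auto. Qed.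

Lemma countable_union {X Y} (S : X -> Prop) (T : X -> Y -> Prop) :
  countable S -> (forall x, S x -> countable (T x)) ->
  countable (fun y => exists x, S x /\ T x y).
Proof.
  intros [g Hg] HT.
  set (inj_on := fun x (h : Y -> nat) => forall y y', T x y -> T x y' -> h y = h y' -> y = y').
  set (gT := fun x => epsilon (inhabits (fun _ : Y => 0)) (inj_on x)).
  assert (HgT : forall x, S x -> inj_on x (gT x)) by (intros x Hx; apply epsilon_spec, HT, Hx).
  set (code := fun y => epsilon (inhabits 0)
                 (fun n => exists x, S x /\ T x y /\ n = Cantor.to_nat (g x, gT x y))).
  assert (Hcode : forall y, (exists x, S x /\ T x y) ->
            exists x, S x /\ T x y /\ code y = Cantor.to_nat (g x, gT x y)).
  { intros y [x [Sx Tx]]. apply epsilon_spec. exists (Cantor.to_nat (g x, gT x y)), x. auto. }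
  exists code. intros y y' Hy Hy' E.
  destruct (Hcode y Hy) as [x [Sx [Tx Ex]]], (Hcode y' Hy') as [x' [Sx' [Tx' Ex']]].
  rewrite Ex, Ex' in E. apply (f_equal Cantor.of_nat) in E. rewrite !Cantor.cancel_of_to in E.
  injection E as Egx EgT. assert (x = x') as <- by (apply Hg; auto).
  exact (HgT x Sx y y' Tx Tx' EgT).
Qed.

Lemma fsum_filter_supp {I} (u : I -> A) l :
  fsum A u l =
  fsum A u (filter (fun i => if excluded_middle_informative (u i = pzero A) then false else true) l).
Proof.
  induction l as [|x l IH]; simpl; [reflexivity|].
  destruct (excluded_middle_informative (u x = pzero A)) as [Hx|Hx]; simpl; rewrite <- IH;
    [|reflexivity].
  rewrite Hx. destruct (fsum A u l); simpl; [apply padd_0l | reflexivity].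
Qed.

Lemma isW_fsum {X} (m : X -> A) l : isW A m -> NoDup l -> exists w, fsum A m l = Some w.
Proof.
  intros [_ [v Hv]] N. rewrite fsum_filter_supp. apply (proj1 (has_sum_iff _ _ _) Hv). split.
  - apply NoDup_filter, N.
  - intros i Hi. apply filter_In in Hi as [_ Hi].
    destruct excluded_middle_informative; [discriminate | assumption].
Qed.

Lemma isW_le {Y} (m1 m2 : Y -> A) :
  (forall y, le A (m1 y) (m2 y)) -> isW A m2 -> isW A m1.
Proof.
  intros Hle Hm2. split.
  - apply (countable_sub (supp A m2)); [|exact (proj1 Hm2)].
    intros y Hy E. apply Hy, (le_antisym HA); [|apply le_0l]. rewrite <- E. apply Hle.
  - apply has_sum_exists. intros l [N _]. destruct (isW_fsum m2 l Hm2 N) as [b Hb].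
    destruct (fsum_le m1 m2 l b (fun y _ => Hle y) Hb) as [a [Ea _]]. eauto.
Qed.

Lemma leW_of_le {Y} (m1 m2 : Y -> A) :
  (forall y, le A (m1 y) (m2 y)) -> isW A m2 -> leW A m1 m2.
Proof.
  intros Hle Hm2.
  set (d := fun y => epsilon (inhabits (pzero A)) (fun w => padd A (m1 y) w = Some (m2 y))).
  assert (Hd : forall y, padd A (m1 y) (d y) = Some (m2 y)) by (intros y; apply epsilon_spec, Hle).
  exists d. split; [|exact Hd]. apply (isW_le d m2); [|exact Hm2].
  intros y. exists (m1 y). rewrite (add_comm HA). apply Hd.
Qed.

Lemma leW_le {Y} (m1 m2 : Y -> A) : leW A m1 m2 -> forall y, le A (m1 y) (m2 y).
Proof. intros [d [_ H]] y. exact (le_padd_l (H y)). Qed.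

Lemma isW_has_sum_pmul_l {X} (m c : X -> A) :
  isW A m -> exists v, has_sum A (fun x => pmul A (m x) (c x)) (supp A m) v.
Proof.
  intros Hm. destruct (has_top HA) as [T HT]. apply has_sum_exists. intros l [N _].
  destruct (isW_fsum m l Hm N) as [a Ha].
  destruct (fsum_le (fun x => pmul A (m x) (c x)) (fun x => pmul A (m x) T) l (pmul A a T))
    as [w [Ew _]]; [intros x _; apply pmul_le_l, HT | apply fsum_pmul_r, Ha | eauto].
Qed.

Lemma dagger_has_sum {X Y} (f : X -> Y -> A) m y :
  isW A m -> has_sum A (fun x => pmul A (m x) (f x y)) (supp A m) (dagger A f m y).
Proof.
  intros Hm. destruct (isW_has_sum_pmul_l m (fun x => f x y) Hm) as [v Hv].
  unfold dagger. now rewrite (isum_eq _ _ _ Hv).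
Qed.

Lemma supp_dagger {X Y} (f : X -> Y -> A) m y :
  isW A m -> supp A (dagger A f m) y -> exists x, supp A m x /\ supp A (f x) y.
Proof.
  intros Hm Hy. apply NNPP. intros Hnone. apply Hy, (le_antisym HA); [|apply le_0l].
  apply (is_sup_least (proj2 (proj1 (has_sum_iff _ _ _) (dagger_has_sum f m y Hm)))).
  intros w [K [[_ HK] Ew]]. rewrite fsum_zero in Ew.
  - injection Ew as <-. apply (le_refl HA).
  - intros x Hx. replace (f x y) with (pzero A); [apply (mul_zero_r HA)|].
    apply NNPP. intros Hfx. apply Hnone. exists x. split; [apply HK, Hx | intros E; auto].
Qed.

Lemma isW_dagger {X Y} (f : X -> Y -> A) m : isKl A f -> isW A m -> isW A (dagger A f m).
Proof.
  intros Hf Hm. split.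
  - apply (countable_sub (fun y => exists x, supp A m x /\ supp A (f x) y)).
    + intros y. exact (supp_dagger f m y Hm).
    + apply countable_union; [exact (proj1 Hm) | intros x _; exact (proj1 (Hf x))].
  - apply has_sum_exists. intros L [NL _].
    set (b := fun x => oget (fsum A (f x) L)).
    destruct (isW_has_sum_pmul_l m b Hm) as [c Hc]. exists c.
    refine (fsum_has_sum _ _ _ _ _ _ (fun y => dagger_has_sum f m y Hm) _ Hc).
    intros x _. apply fsum_pmul_l. destruct (isW_fsum (f x) L (Hf x) NL) as [w Hw].
    unfold b. now rewrite Hw.
Qed.

Lemma isKl_sup_pointwise {X Y} (D : (X -> Y -> A) -> Prop) s :
  (forall f, D f -> isKl A f) -> directed (leKl A) D -> is_sup_in (isKl A) (leKl A) D s ->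
  forall x y, is_sup A (ofam D (fun f => Some (f x y))) (s x y).
Proof.
  intros HD Hdir [Hs [Hub Hleast]].
  set (sp := fun x y =>
         epsilon (inhabits (pzero A)) (is_sup A (ofam D (fun f => Some (f x y))))).
  assert (Hsp : forall x y, is_sup A (ofam D (fun f => Some (f x y))) (sp x y)).
  { intros x y. apply epsilon_spec, (dir_complete HA).
    apply (directed_img (leKl A) _ _ Hdir). intros f g _ _ Hfg. apply leW_le, Hfg. }
  assert (Hsp_s : forall x y, le A (sp x y) (s x y)).
  { intros x y. apply (is_sup_least (Hsp x y)). intros a [f [Df E]]. injection E as <-.
    apply leW_le, Hub, Df. }
  assert (Hs_sp : leKl A s sp).
  { apply Hleast.
    - intros x. exact (isW_le (sp x) (s x) (Hsp_s x) (Hs x)).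
    - intros f Df x. apply leW_of_le; [|exact (isW_le (sp x) (s x) (Hsp_s x) (Hs x))].
      intros y. apply (is_sup_ub (Hsp x y)). exists f. auto. }
  intros x y. replace (s x y) with (sp x y); [apply Hsp|].
  apply (le_antisym HA); [apply Hsp_s | apply leW_le, Hs_sp].
Qed.

Lemma dagger_sup {X Y} (D : (X -> Y -> A) -> Prop) s m y :
  directed (fun f g => forall x y, le A (f x y) (g x y)) D ->
  (forall x y, is_sup A (ofam D (fun f => Some (f x y))) (s x y)) -> isW A m ->
  is_sup A (ofam D (fun f => Some (dagger A f m y))) (dagger A s m y).
Proof.
  intros Hdir Hs Hm.
  apply (has_sum_sup D (fun f x => pmul A (m x) (f x y)) (fun x => pmul A (m x) (s x y))
           (supp A m)).
  - refine (directed_mono _ _ _ _ Hdir). intros f g _ _ Hfg x. apply pmul_le_l, Hfg.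
  - intros x. apply sup_pmul_l; [|apply Hs].
    apply (directed_img _ _ _ Hdir). auto.
  - intros f _. apply dagger_has_sum, Hm.
  - apply dagger_has_sum, Hm.
Qed.

End PartialSemiring.

Theorem lemmaA4 (A : PSR) (HA : PSR_axioms A) (X Y : Type) :
  forall (D : (X -> Y -> A) -> Prop) (s : X -> Y -> A),
    (forall f, D f -> @isKl A X Y f) ->
    directed (@leKl A X Y) D ->
    is_sup_in (@isKl A X Y) (@leKl A X Y) D s ->
    is_sup_in (@isWW A X Y) (@leWW A X Y)
      (fun h => exists f, D f /\ h = @dagger A X Y f) (@dagger A X Y s).
Proof.
  intros D s HD Hdir Hsup.
  assert (Hdir_pt : directed (fun f g => forall x y, le A (f x y) (g x y)) D).
  { refine (directed_mono _ _ _ _ Hdir). intros f g _ _ Hfg x. apply (leW_le A), Hfg. }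
  pose proof (isKl_sup_pointwise A HA D s HD Hdir Hsup) as Hs_pt.
  destruct Hsup as [Hs _].
  split; [|split].
  - intros m Hm. exact (isW_dagger A HA s m Hs Hm).
  - intros h [f [Df ->]] m Hm. apply (leW_of_le A HA); [|exact (isW_dagger A HA s m Hs Hm)].
    intros y. apply (is_sup_ub A (dagger_sup A HA D s m y Hdir_pt Hs_pt Hm)). exists f. auto.
  - intros t Ht Hup m Hm. apply (leW_of_le A HA); [|exact (Ht m Hm)].
    intros y. apply (is_sup_least A (dagger_sup A HA D s m y Hdir_pt Hs_pt Hm)).
    intros a [f [Df E]]. injection E as <-.
    apply (leW_le A), (Hup (dagger A f)); [exists f; auto | exact Hm].
Qed.
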